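(* Let $V$ be a finite-dimensional real vector space with skew-symmetric bilinear forms $A$ and $B$, $B$ non-degenerate, such that the Jordan–Kronecker decomposition of $(V, A, B)$ consists only of real Jordan blocks with the same complex eigenvalue $\lambda = \alpha + i\beta$, $\beta \neq 0$. Let $J$ be the semisimple part of $\frac{P - \alpha E}{\beta}$, where $P = B^{-1}A$. Then every automorphism $Q \in \mathrm{Aut}(V, A, B)$ commutes with $J$: $QJ = JQ$. Consequently there is a natural one-to-one correspondence $\mathrm{Aut}(V, A, B) \cong \mathrm{Aut}(V^{\mathbb{C}}, A^{\mathbb{C}}, B^{\mathbb{C}})$. Moreover, a subspace $U \subset V$ is invariant (under $\mathrm{Aut}(V,A,B)$) if and only if $U$ is $J$-invariant and the corresponding complex subspace $U^{\mathbb{C}}$ of $(V^{\mathbb{C}}, A^{\mathbb{C}}, B^{\mathbb{C}})$ is invariant (under $\mathrm{Aut}(V^{\mathbb{C}}, A^{\mathbb{C}}, B^{\mathbb{C}})$).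
   Context: $P = B^{-1}A$ means $A(u,v) = B(Pu,v)$. $J$ satisfies $J^2 = -E$ and is self-adjoint with respect to $A$ and $B$. $V^{\mathbb{C}}$ denotes $V$ regarded as a complex vector space via the complex structure $J$ (i.e. $i \cdot v := Jv$), and $A^{\mathbb{C}}(u,v) = A(u,v) - iA(u,Jv)$, $B^{\mathbb{C}}(u,v) = B(u,v) - iB(u,Jv)$ are complex bilinear forms on it. For a $J$-invariant real subspace $U$, $U^{\mathbb{C}}$ is $U$ regarded as a complex subspace of $V^{\mathbb{C}}$. $\mathrm{Aut}(V,A,B)$ (resp. $\mathrm{Aut}(V^{\mathbb{C}}, A^{\mathbb{C}}, B^{\mathbb{C}})$) is the group of real (resp. complex) linear automorphisms preserving both forms; a subspace is invariant if it is preserved by the corresponding group. A real Jordan block with eigenvalue $\alpha + i\beta$ of size $k$ is a $4k$-dimensional summand with basis in which $B = \begin{pmatrix}0 & \mathrm{diag}(E_2,\dots,E_2)\\ -\mathrm{diag}(E_2,\dots,E_2) & 0\end{pmatrix}$ and $A = \begin{pmatrix}0 & \mathcal{J}\\ -\mathcal{J}^T & 0\end{pmatrix}$, where $\mathcal{J}$ is the $k\times k$ block upper-bidiagonal matrix with diagonal blocks $\Lambda = \begin{pmatrix}\alpha & -\beta\\ \beta & \alpha\end{pmatrix}$ and superdiagonal blocks $E_2$ (the $2\times 2$ identity). *)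

From mathcomp Require Import all_boot all_order all_algebra.
From mathcomp Require Import separable.
From mathcomp Require Import complex.
Set Implicit Arguments. Unset Strict Implicit. Unset Printing Implicit Defensive.
Import Order.TTheory GRing.Theory Num.Theory.
Local Open Scope ring_scope.

(* V = 'rV[R]_n (row vectors); linear maps act on the right:
   the map with matrix Q sends u to u *m Q. *)
Section Defs.
Variable R : rcfType.

Definition bform n (M : 'M[R]_n) (u v : 'rV[R]_n) : R := (u *m M *m v^T) 0 0.

(* P = B^{-1} A, i.e. A(u,v) = B(Pu,v); with maps acting on row vectors on
   the right this is the matrix A B^{-1}. *)
Definition Pop n (A B : 'M[R]_n) : 'M[R]_n := A *m invmx B.

(* the 2x2 block Lambda = [[a, -b], [b, a]] as a function of (row,col) in {0,1} *)
Definition lam (a b : R) (r c : nat) : R :=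
  if r == c then a else if r == 0%N then - b else b.

(* k x k block upper-bidiagonal matrix (size 2k), diagonal blocks Lambda,
   superdiagonal blocks E_2 ; index i lies in block i./2 at position odd i *)
Definition rJbidiag (a b : R) (k : nat) : 'M[R]_(k.*2) :=
  \matrix_(i, j)
    (if (i : nat)./2 == (j : nat)./2 then lam a b (odd i) (odd j)
     else if (j : nat)./2 == ((i : nat)./2).+1 then (odd i == odd j)%:R
     else 0).

(* the two Gram matrices of the real Jordan block of size k (dimension 4k) *)
Definition rJblockA (a b : R) (k : nat) : 'M[R]_(k.*2 + k.*2) :=
  block_mx 0 (rJbidiag a b k) (- (rJbidiag a b k)^T) 0.
Definition rJblockB (k : nat) : 'M[R]_(k.*2 + k.*2) :=
  block_mx 0 1%:M (- 1%:M) 0.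

(* The Jordan--Kronecker decomposition of (R^n, A, B) consists only of real
   Jordan blocks with eigenvalue a + i b: there is a basis (the rows of T) in
   which the Gram matrices of A and B are block diagonal with real Jordan
   blocks (of sizes k i) on the diagonal. *)
Definition JK_only_real_jordan (a b : R) n (A B : 'M[R]_n) : Prop :=
  exists (m : nat) (k : 'I_m -> nat)
         (T : 'M[R]_(\sum_(i < m) ((k i).*2 + (k i).*2), n)),
    [/\ row_free T, row_full T,
        T *m A *m T^T = \mxdiag_(i < m) rJblockA a b (k i)
      & T *m B *m T^T = \mxdiag_(i < m) rJblockB (k i)].

Definition peval_mx n (p : {poly R}) (S : 'M[R]_n) : 'M[R]_n :=
  \sum_(i < size p) p`_i *: S ^+ i.

Definition semisimple_mx n (S : 'M[R]_n) : Prop :=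
  exists p : {poly R}, separable_poly p /\ peval_mx p S = 0.

Definition semisimple_part n (X S : 'M[R]_n) : Prop :=
  [/\ semisimple_mx S, (exists e : nat, (X - S) ^+ e = 0)
    & S *m (X - S) = (X - S) *m S].

Definition autAB n (A B Q : 'M[R]_n) : Prop :=
  Q \in unitmx /\
  forall u v, bform A (u *m Q) (v *m Q) = bform A u v /\
              bform B (u *m Q) (v *m Q) = bform B u v.

Definition cform n (J M : 'M[R]_n) (u v : 'rV[R]_n) : R[i] :=
  Complex (bform M u v) (- bform M u (v *m J)).

(* Aut(V^C, A^C, B^C): complex-linear (= commuting with J) invertible maps
   preserving A^C and B^C *)
Definition autABC n (J A B Q : 'M[R]_n) : Prop :=
  [/\ Q \in unitmx, Q *m J = J *m Q &
      forall u v, cform J A (u *m Q) (v *m Q) = cform J A u v /\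
                  cform J B (u *m Q) (v *m Q) = cform J B u v].

(* subspaces are row spaces of matrices *)
Definition invariant_sub n (A B U : 'M[R]_n) : Prop :=
  forall Q, autAB A B Q -> (U *m Q <= U)%MS.

Definition invariant_subC n (J A B U : 'M[R]_n) : Prop :=
  forall Q, autABC J A B Q -> (U *m Q <= U)%MS.

End Defs.

(* Put X := (P - a)/b.  In the basis of real Jordan blocks, X = S + N where S
   acts on each block as the complex structure diag(C, C^T) (C the block
   diagonal copy of [[0,-1],[1,0]]) and N is the nilpotent superdiagonal part;
   S^2 = -1 and SN = NS.  Anything commuting with S + N commutes with S: its
   S-antilinear part intertwines the nilpotent N with the invertible N + 2S,
   hence vanishes.  So the semisimple part J commutes with S, J - S is
   nilpotent, and J^2 + 1 = (J - S)(J + S) is a nilpotent polynomial in the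
   semisimple J, hence 0; then J + S is invertible and J = S.  Automorphisms
   commute with P = B^-1 A, hence with S = J, and then the complexified forms
   carry the same information as A and B.  Finally S is a linear combination
   of the automorphisms diag(tC, t^-1 C) (t = 2, 1/2), so invariant subspaces
   are J-invariant. *)

From mathcomp Require Import all_boot all_order all_algebra.
From mathcomp Require Import separable complex.
From mathcomp Require Import zify ring.
Import Order.TTheory GRing.Theory Num.Theory.
Set Implicit Arguments. Unset Strict Implicit. Unset Printing Implicit Defensive.
Local Open Scope ring_scope.

Section Nilpotent.
Variable Rg : pzSemiRingType.
Implicit Types x y : Rg.

Lemma nilpotentM_comm x y e : GRing.comm x y -> x ^+ e = 0 -> (x * y) ^+ e = 0.
Proof. by move=> cxy xe; rewrite exprMn_comm // xe mul0r. Qed.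

Lemma nilpotentD_comm x y e f : GRing.comm x y -> x ^+ e = 0 -> y ^+ f = 0 ->
  (x + y) ^+ (e + f) = 0.
Proof.
move=> cxy xe yf; rewrite exprDn_comm // big1 // => i _.
have [le_e|lt_e] := leqP e (e + f - i).
  by rewrite -(subnKC le_e) exprD xe !mul0r mul0rn.
have le_f : (f <= i)%N by move: lt_e (ltn_ord i); lia.
by rewrite -(subnKC le_f) exprD yf mul0r mulr0 mul0rn.
Qed.

End Nilpotent.

Section NilpotentUnit.
Variable Rg : unitRingType.
Implicit Types x y u k : Rg.

Lemma unitr1B_nilpotent y e : y ^+ e = 0 -> 1 - y \is a GRing.unit.
Proof.
move=> ye; apply/unitrP; exists (\sum_(i < e) y ^+ i).
have inv : (1 - y) * \sum_(i < e) y ^+ i = 1.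
  by rewrite -opprB mulNr -subrX1 ye sub0r opprK.
have cy : GRing.comm (1 - y) (\sum_(i < e) y ^+ i).
  apply: commr_sum => i _; apply/commr_sym/commrB; first exact: commr1.
  exact/commr_sym/commrX/commr_refl.
by rewrite -cy.
Qed.

Lemma unitrD_nilpotent u x e : GRing.comm u x -> x ^+ e = 0 ->
  u \is a GRing.unit -> u + x \is a GRing.unit.
Proof.
move=> cux xe Uu; have cVx : GRing.comm u^-1 x by apply/commr_sym/commrV/commr_sym.
have -> : u + x = u * (1 - - (u^-1 * x)).
  by rewrite opprK mulrDr mulr1 mulrA mulrV // mul1r.
rewrite unitrMr //; apply: (@unitr1B_nilpotent _ e).
by rewrite exprNn exprMn_comm // xe !mulr0.
Qed.

Lemma nilpotent_intertwiner_eq0 x u k e : x ^+ e = 0 -> u \is a GRing.unit ->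
  x * k = k * u -> k = 0.
Proof.
move=> xe Uu xk; have xik i : x ^+ i * k = k * u ^+ i.
  elim: i => [|i IHi]; first by rewrite !expr0 mul1r mulr1.
  by rewrite exprSr -mulrA xk mulrA IHi -mulrA -exprSr.
by apply: (mulIr (unitrX e Uu)); rewrite -xik xe !mul0r.
Qed.
End NilpotentUnit.

Section ComplexStructure.
Variables (Rg : unitRingType) (S N : Rg) (e : nat).
Hypotheses (two_unit : (2%:R : Rg) \is a GRing.unit) (SS : S * S = -1)
  (cSN : GRing.comm S N) (Ne : N ^+ e = 0).

Lemma unitr_complex2D_nilpotent x f : GRing.comm S x -> x ^+ f = 0 ->
  S *+ 2 + x \is a GRing.unit.
Proof.
move=> cSx xf; apply: (unitrD_nilpotent _ xf); first exact/commr_sym/commrMn/commr_sym.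
rewrite -mulr_natl unitrM_comm; last exact/commr_sym/commr_nat.
by rewrite two_unit; apply/unitrP; exists (- S); rewrite mulrN mulNr SS opprK.
Qed.

Lemma comm_complex_part Y : GRing.comm Y (S + N) -> GRing.comm Y S.
Proof.
(* [K] is twice the S-antilinear part of [Y]; it intertwines [N] with the
   invertible [S *+ 2 + N]. *)
move=> cY; pose K := Y + S * Y * S.
have D_SN : Y * S - S * Y = N * Y - Y * N.
  move: cY; rewrite /GRing.comm mulrDr mulrDl => cY.
  by apply/eqP; rewrite subr_eq addrAC eq_sym subr_eq cY addrC.
have SDS : S * (Y * S - S * Y) * S = Y * S - S * Y.
  rewrite mulrBr mulrBl !mulrA SS mulN1r -(mulrA _ S S) SS mulrN1.
  by rewrite mulNr opprK addrC.
have KS : K * S = Y * S - S * Y by rewrite /K mulrDl -(mulrA _ S S) SS mulrN1.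
have NK : N * K = K * (S *+ 2 + N).
  have NY : N * Y = (Y * S - S * Y) + Y * N by rewrite D_SN subrK.
  have NK : N * K = N * Y + S * (N * Y) * S by rewrite /K mulrDr !mulrA cSN.
  have KN : K * N = Y * N + S * (Y * N) * S by rewrite /K mulrDl -!mulrA cSN.
  by rewrite [RHS]mulrDr mulrnAr KS NK KN NY mulrDr mulrDl SDS mulr2n addrACA.
have K0 : K = 0 := nilpotent_intertwiner_eq0 Ne (unitr_complex2D_nilpotent cSN Ne) NK.
by apply/eqP; rewrite -subr_eq0 -KS K0 mul0r.
Qed.
End ComplexStructure.

Lemma separable_dvdp_exp (F : fieldType) (p q : {poly F}) e :
  separable_poly p -> p %| q ^+ e -> p %| q.
Proof.
move=> sp pqe; set g := gcdp p q; set r := p %/ g.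
have Dp : r * g = p by apply/divpK/dvdp_gcdl.
have rp : r %| p by rewrite -Dp dvdp_mulIl.
have crg : coprimep r g by apply: (separable_coprime sp); rewrite Dp.
have crq : coprimep r q.
  apply/coprimepP => d dr dq; apply: (coprimepP _ _ crg) => //.
  by rewrite dvdp_gcd (dvdp_trans dr rp) dq.
have /andP[r1 _] : r %= 1.
  exact: (coprimepP _ _ (coprimep_expr e crq)) r (dvdpp r) (dvdp_trans rp pqe).
by rewrite -Dp -[q]mul1r dvdp_mul ?dvdp_gcdr.
Qed.

Lemma horner_mx_nilpotent_eq0 (F : fieldType) n (J : 'M[F]_n.+1) p q e :
  separable_poly p -> horner_mx J p = 0 -> horner_mx J q ^+ e = 0 ->
  horner_mx J q = 0.
Proof.
move=> sp pJ qJe; apply/mxminpoly_minP/(@separable_dvdp_exp _ _ _ e).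
  exact: dvdp_separable (mxminpoly_min pJ) sp.
by apply: mxminpoly_min; rewrite rmorphXn.
Qed.

Lemma two_unitmx (R : numFieldType) n : (2%:R : 'M[R]_n.+1) \is a GRing.unit.
Proof. by rewrite -scaler_nat unitmxZ ?unitmx1 // unitfE pnatr_eq0. Qed.

Section SemisimplePart.
Variable R : rcfType.

Lemma peval_mxE n (J : 'M[R]_n.+1) p : peval_mx p J = horner_mx J p.
Proof.
rewrite -{2}(coefK p) poly_def /peval_mx rmorph_sum /=.
by apply: eq_bigr => i _; rewrite linearZ /= rmorphXn /= horner_mx_X.
Qed.

Lemma semisimple_part_complexE n (S N J : 'M[R]_n) e :
  S * S = -1 -> GRing.comm S N -> N ^+ e = 0 -> semisimple_part (S + N) J ->
  J = S.
Proof.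
case: n S N J => [|n] S N J SS cSN Ne; first by rewrite [J]flatmx0 [S]flatmx0.
case=> [[p [sp pJ]] [f XJf] cJXJ].
have two_unit := two_unitmx R n.
set X := S + N in XJf cJXJ.
have cJX : GRing.comm J X.
  by move: cJXJ; rewrite mulmxE mulrBr mulrBl => /addIr.
have cJS : GRing.comm J S := comm_complex_part two_unit SS cSN Ne cJX.
have cSX : GRing.comm S X by apply/commrD/cSN/commr_refl.
have cNX : GRing.comm N X by apply/commrD/commr_refl/commr_sym.
have cJN : GRing.comm J N.
  have -> : N = X - S by rewrite /X (addrC S) addrK.
  exact: commrB.
set D := J - S.
have cSD : GRing.comm S D by apply/commrB/commr_refl/commr_sym.
have D_nil : D ^+ (e + f) = 0.
  have -> : D = N + - (X - J).
    by rewrite /D /X opprB addrCA opprD [N + _]addrCA subrr addr0.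
  apply: nilpotentD_comm Ne _; last by rewrite exprNn XJf mulr0.
  by apply/commrN/commrB => //; apply/commr_sym/cJN.
have JJ1 : J * J + 1 = D * (S *+ 2 + D).
  have -> : S *+ 2 + D = S + J by rewrite /D mulr2n addrACA subrr addr0.
  by rewrite /D mulrBl !mulrDr SS cJS opprD opprK (addrC (S * J)) addrACA subrr addr0.
have JJ0 : J * J + 1 = 0.
  have qJ : horner_mx J ('X^2 + 1) = J * J + 1.
    by rewrite rmorphD rmorphXn rmorph1 /= horner_mx_X expr2.
  rewrite -qJ; apply: (horner_mx_nilpotent_eq0 (e := e + f) sp).
    by rewrite -peval_mxE.
  rewrite qJ JJ1 nilpotentM_comm //.
  by apply/commrD/commr_refl/commrMn; exact/commr_sym.
have D0 : D = 0.
  apply: (mulIr (unitr_complex2D_nilpotent two_unit SS cSD D_nil)).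
  by rewrite -JJ1 JJ0 mul0r.
by apply/eqP; rewrite -subr_eq0 -/D D0.
Qed.
Lemma comm_complex_part_mx n (S N Y : 'M[R]_n) e :
  S * S = -1 -> GRing.comm S N -> N ^+ e = 0 ->
  GRing.comm Y (S + N) -> GRing.comm Y S.
Proof.
case: n S N Y => [|n] S N Y SS cSN Ne.
  by rewrite /GRing.comm [Y * S]flatmx0 [S * Y]flatmx0.
have two_unit := two_unitmx R n.
by move=> cY; apply: (comm_complex_part two_unit SS cSN Ne cY).
Qed.
End SemisimplePart.

Section Automorphisms.
Variables (R : rcfType) (n : nat).
Implicit Types A B J M Q U : 'M[R]_n.

Lemma bform_mulmx M Q u v : bform M (u *m Q) (v *m Q) = bform (Q *m M *m Q^T) u v.
Proof. by rewrite /bform trmx_mul !mulmxA. Qed.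

Lemma bform_inj M1 M2 : (forall u v, bform M1 u v = bform M2 u v) -> M1 = M2.
Proof.
move=> eqM; apply/matrixP => i j; have := eqM (delta_mx 0 i) (delta_mx 0 j).
by rewrite /bform !trmx_delta -!rowE -!colE !mxE.
Qed.

Lemma autABP A B Q :
  autAB A B Q <-> [/\ Q \in unitmx, Q *m A *m Q^T = A & Q *m B *m Q^T = B].
Proof.
split=> [[uQ QAB]|[uQ QA QB]].
  by split=> //; apply: bform_inj => u v; rewrite -bform_mulmx; case: (QAB u v).
by split=> // u v; rewrite !bform_mulmx QA QB.
Qed.

Lemma autAB_comm_Pop A B Q : B \in unitmx -> autAB A B Q ->
  Q *m Pop A B = Pop A B *m Q.
Proof.
move=> uB /autABP[uQ QA QB]; have uQt : Q^T \in unitmx by rewrite unitmx_tr.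
have QAE : Q *m A = A *m invmx Q^T by rewrite -{2}QA mulmxK.
have QBE : Q *m B = B *m invmx Q^T by rewrite -{2}QB mulmxK.
have BQE : invmx B *m Q = invmx Q^T *m invmx B.
  rewrite -[LHS]mulmx1 -(mulmxV uB) mulmxA -(mulmxA (invmx B) Q B) QBE.
  by rewrite mulmxA (mulVmx uB) mul1mx.
by rewrite /Pop mulmxA QAE -mulmxA -BQE mulmxA.
Qed.

Lemma autABC_autAB J A B Q : autABC J A B Q -> autAB A B Q.
Proof.
case=> uQ _ QAB; split=> // u v.
by case: (QAB u v) => /(congr1 (@complex.Re R)) /= -> /(congr1 (@complex.Re R)) /= ->.
Qed.

Lemma autAB_autABC J A B Q : Q *m J = J *m Q -> autAB A B Q -> autABC J A B Q.
Proof.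
move=> QJ [uQ QAB]; split=> // u v; rewrite /cform -mulmxA QJ mulmxA.
by case: (QAB u v) => -> ->; case: (QAB u (v *m J)) => -> ->.
Qed.

Lemma invariant_sub_autZB A B U Q1 Q2 c : autAB A B Q1 -> autAB A B Q2 ->
  invariant_sub A B U -> (U *m (c *: (Q1 - Q2)) <= U)%MS.
Proof.
move=> aQ1 aQ2 iU; rewrite -scalemxAr scalemx_sub // mulmxBr addmx_sub //.
  exact: iU.
by rewrite eqmx_opp; apply: iU.
Qed.
End Automorphisms.

Lemma mulmx_block_diag (R : pzSemiRingType) m1 m2 (A1 A2 : 'M[R]_m1) (D1 D2 : 'M[R]_m2) :
  block_mx A1 0 0 D1 *m block_mx A2 0 0 D2 = block_mx (A1 *m A2) 0 0 (D1 *m D2).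
Proof. by rewrite mulmx_block !mulmx0 !mul0mx !addr0 !add0r. Qed.

Lemma expmx_block_diag (R : pzSemiRingType) m1 m2 (A : 'M[R]_m1) (D : 'M[R]_m2) e :
  block_mx A 0 0 D ^+ e = block_mx (A ^+ e) 0 0 (D ^+ e).
Proof.
elim: e => [|e IHe]; first by rewrite !expr0 -scalar_mx_block.
by rewrite !exprS -!mulmxE IHe mulmx_block_diag.
Qed.

Lemma expmxZn (R : comPzSemiRingType) m c (A : 'M[R]_m) e :
  (c *: A) ^+ e = c ^+ e *: A ^+ e.
Proof.
elim: e => [|e IHe]; first by rewrite !expr0 scale1r.
by rewrite !exprS -!mulmxE IHe -scalemxAl -scalemxAr scalerA.
Qed.

Lemma trmxX (R : comPzSemiRingType) m (A : 'M[R]_m) e : (A ^+ e)^T = A^T ^+ e.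
Proof.
elim: e => [|e IHe]; first by rewrite !expr0 trmx1.
by rewrite exprS exprSr -!mulmxE trmx_mul IHe.
Qed.

Lemma expmx_graded_eq0 (R : pzSemiRingType) n (h : 'I_n -> nat) (Y : 'M[R]_n) e i j :
  (forall i j, h j != (h i).+1 -> Y i j = 0) -> h j != (h i + e)%N -> (Y ^+ e) i j = 0.
Proof.
move=> Y0; elim: e i j => [|e IHe] i j hij.
  by rewrite expr0 mxE; case: eqP => // eij; rewrite eij addn0 eqxx in hij.
rewrite exprSr -mulmxE mxE big1 // => l _.
have [hl|hl] := eqVneq (h l) (h i + e)%N; last by rewrite IHe ?mul0r.
by rewrite Y0 ?mulr0 // hl -addnS.
Qed.

Lemma block_diag_congr_antidiag (R : comPzSemiRingType) m1 m2
    (P : 'M[R]_m1) (Q : 'M[R]_m2) X Y :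
  block_mx P 0 0 Q *m block_mx 0 X Y 0 *m (block_mx P 0 0 Q)^T =
  block_mx 0 (P *m X *m Q^T) (Q *m Y *m P^T) 0.
Proof.
rewrite tr_block_mx !trmx0 !mulmx_block.
by rewrite !(mulmx0, mul0mx, addr0, add0r).
Qed.

Lemma mul_mxdiag (R : pzSemiRingType) p (p_ : 'I_p -> nat)
    (F G : forall i, 'M[R]_(p_ i)) :
  \mxdiag_i F i *m \mxdiag_i G i = \mxdiag_i (F i *m G i).
Proof.
rewrite {2}/mxdiag mul_mxdiag_mxblock /mxdiag; apply: eq_mxblock => i j.
by case: eqVneq => [<-|]; rewrite ?conform_mx_id ?mulmx0.
Qed.

Section RealJordanBlock.
Variables (R : rcfType) (k : nat).
Local Notation m := k.*2.
Implicit Types i j : 'I_m.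

Fact partner_subproof i : ((if odd i then i.-1 else i.+1) < m)%N.
Proof. by have := ltn_ord i; case: ifP; lia. Qed.

Definition partner i : 'I_m := Ordinal (partner_subproof i).

Lemma odd_partner i : odd (partner i) = ~~ odd i.
Proof. by rewrite /=; case: ifP; lia. Qed.

Lemma half_partner i : (partner i)./2 = i./2.
Proof. by rewrite /=; case: ifP; lia. Qed.

Lemma eq_ordE i j : (i == j) = (i./2 == j./2) && (odd i == odd j).
Proof.
by apply/eqP/andP => [->|[/eqP eq_half /eqP eq_odd]] //; apply: val_inj => /=; lia.
Qed.

Lemma partnerK : involutive partner.
Proof.
by move=> i; apply/eqP; rewrite eq_ordE !half_partner !odd_partner negbK !eqxx.
Qed.

Lemma eq_partnerE i j : (j == partner i) = (i./2 == j./2) && (odd j == ~~ odd i).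
Proof. by rewrite eq_ordE half_partner odd_partner eq_sym. Qed.

Definition sgnb (x : bool) : R := if x then 1 else -1.

(* Block diagonal with blocks [[0,-1],[1,0]], i.e. the part of [rJbidiag 0 1 k]
   on the diagonal blocks. *)
Definition rJcplx : 'M[R]_m :=
  \matrix_(i, j) if j == partner i then sgnb (odd i) else 0.

Definition rJshift : 'M[R]_m := rJbidiag 0 0 k.

Lemma mul_rJcplx_mx p (Y : 'M[R]_(m, p)) i (j : 'I_p) :
  (rJcplx *m Y) i j = sgnb (odd i) * Y (partner i) j.
Proof.
rewrite mxE (bigD1 (partner i)) //= big1 ?addr0 => [|l /negbTE nl].
  by rewrite mxE eqxx.
by rewrite mxE nl mul0r.
Qed.

Lemma mul_mx_rJcplx p (Y : 'M[R]_(p, m)) (i : 'I_p) j :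
  (Y *m rJcplx) i j = Y i (partner j) * sgnb (~~ odd j).
Proof.
rewrite mxE (bigD1 (partner j)) //= big1 ?addr0 => [|l nl].
  by rewrite mxE partnerK eqxx odd_partner.
by rewrite mxE eq_sym (canF_eq partnerK) (negbTE nl) mulr0.
Qed.

Lemma rJbidiagE a b : rJbidiag a b k = a%:M + b *: rJcplx + rJshift.
Proof.
apply/matrixP => i j; rewrite !mxE eq_ordE eq_partnerE.
case: (i./2 == j./2); case: (j./2 == (i./2).+1); case: (odd i); case: (odd j);
  rewrite /lam /sgnb /=; ring.
Qed.

Lemma rJcplx_sqr : rJcplx *m rJcplx = - 1%:M.
Proof.
apply/matrixP => i j; rewrite mul_rJcplx_mx !mxE partnerK odd_partner.
have [->|_] := eqVneq i j; last by rewrite mulr0 oppr0.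
by case: (odd j); rewrite /sgnb /=; ring.
Qed.

Lemma tr_rJcplx : rJcplx^T = - rJcplx.
Proof.
apply/matrixP => i j; rewrite !mxE [i == _]eq_sym (canF_eq partnerK).
case: eqP => [->|_]; last by rewrite oppr0.
by rewrite odd_partner; case: (odd i); rewrite /sgnb /=; ring.
Qed.

Lemma rJcplx_shiftC : rJcplx *m rJshift = rJshift *m rJcplx.
Proof.
apply/matrixP => i j; rewrite mul_rJcplx_mx mul_mx_rJcplx !mxE !half_partner !odd_partner.
case: (i./2 == j./2); case: (j./2 == (i./2).+1); case: (odd i); case: (odd j);
  rewrite /lam /sgnb /=; ring.
Qed.

Lemma rJshift_nilpotent : rJshift ^+ k = 0.
Proof.
apply/matrixP => i j; rewrite [RHS]mxE (expmx_graded_eq0 (h := fun i : 'I_m => i./2)) //.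
  move=> {}i {}j /negbTE ij; rewrite mxE ij.
  by rewrite /lam oppr0; do !case: ifP.
by apply/eqP => hj; have := ltn_ord j; lia.
Qed.

Lemma rJcplx_bidiagC a b : rJcplx *m rJbidiag a b k = rJbidiag a b k *m rJcplx.
Proof.
rewrite rJbidiagE !mulmxDr !mulmxDl rJcplx_shiftC scalar_mxC.
by rewrite -!scalemxAl -!scalemxAr.
Qed.

Lemma rJcplx_conj Y : rJcplx *m Y = Y *m rJcplx -> rJcplx *m Y *m rJcplx^T = Y.
Proof. by move=> cY; rewrite cY -mulmxA tr_rJcplx mulmxN rJcplx_sqr opprK mulmx1. Qed.

Definition rJblockS : 'M[R]_(m + m) := block_mx rJcplx 0 0 rJcplx^T.
Definition rJblockN (b : R) : 'M[R]_(m + m) :=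
  b^-1 *: block_mx rJshift 0 0 rJshift^T.
Definition rJblockG (t : R) : 'M[R]_(m + m) :=
  block_mx (t *: rJcplx) 0 0 (t^-1 *: rJcplx).

Lemma rJblockB_sqr : rJblockB R k *m rJblockB R k = - 1%:M.
Proof.
rewrite mulmx_block !(mulmx0, mul0mx, mulmx1, mul1mx, mulmxN, add0r, addr0).
by rewrite (scalar_mx_block m m) opp_block_mx oppr0.
Qed.

(* [- rJblockB R k] is the inverse of [rJblockB R k], so the left-hand side is
   the block of [(P - a)/b]. *)
Lemma rJblockA_mulNB a b : b != 0 ->
  b^-1 *: (rJblockA a b k *m - rJblockB R k - a%:M) = rJblockS + rJblockN b.
Proof.
move=> b0; rewrite mulmxN mulmx_block.
rewrite !(mulmx0, mul0mx, mulmx1, mulmxN, mulNmx, add0r, addr0, oppr0, opprK).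
rewrite opp_block_mx !opprK oppr0 (scalar_mx_block m m) opp_block_mx add_block_mx.
rewrite !(oppr0, addr0).
have WE : rJbidiag a b k - a%:M = b *: rJcplx + rJshift.
  by rewrite rJbidiagE addrAC [a%:M + _]addrC addrK.
have WtE : (rJbidiag a b k)^T - a%:M = b *: rJcplx^T + rJshift^T.
  by rewrite -linearZ -linearD -WE linearB /= tr_scalar_mx.
rewrite WE WtE.
rewrite /rJblockS /rJblockN !scale_block_mx add_block_mx !(scaler0, addr0).
by rewrite !scalerDr !scalerA mulVf // !scale1r.
Qed.

Lemma rJblockS_sqr : rJblockS *m rJblockS = - 1%:M.
Proof.
rewrite mulmx_block_diag -trmx_mul rJcplx_sqr linearN /= trmx1.
by rewrite (scalar_mx_block m m) opp_block_mx oppr0.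
Qed.

Lemma rJblockSN b : rJblockS *m rJblockN b = rJblockN b *m rJblockS.
Proof.
rewrite -scalemxAl -scalemxAr !mulmx_block_diag -!trmx_mul.
by rewrite rJcplx_shiftC.
Qed.

Lemma rJblockN_nilpotent b : rJblockN b ^+ k = 0.
Proof.
rewrite /rJblockN expmxZn expmx_block_diag -trmxX rJshift_nilpotent trmx0.
by rewrite block_mx0 scaler0.
Qed.

Lemma rJblockG_inv t : t != 0 -> rJblockG t *m - rJblockG t^-1 = 1%:M.
Proof.
move=> t0; rewrite mulmxN mulmx_block_diag -!scalemxAl -!scalemxAr !scalerA.
rewrite invrK mulfV ?mulVf ?invr_eq0 // !scale1r rJcplx_sqr.
by rewrite opp_block_mx !opprK oppr0 -scalar_mx_block.
Qed.

Lemma rJblockG_A a b t : t != 0 ->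
  rJblockG t *m rJblockA a b k *m (rJblockG t)^T = rJblockA a b k.
Proof.
have CWt : rJcplx *m (rJbidiag a b k)^T *m rJcplx^T = (rJbidiag a b k)^T.
  by rewrite -[in RHS](rJcplx_conj (rJcplx_bidiagC a b)) !trmx_mul trmxK mulmxA.
move=> t0; rewrite block_diag_congr_antidiag !linearZ /=.
rewrite -!scalemxAl !scalerA mulfV ?mulVf // !scale1r.
by rewrite mulmxN mulNmx CWt rJcplx_conj ?rJcplx_bidiagC.
Qed.

Lemma rJblockG_B t : t != 0 ->
  rJblockG t *m rJblockB R k *m (rJblockG t)^T = rJblockB R k.
Proof.
move=> t0; rewrite block_diag_congr_antidiag !linearZ /=.
rewrite -!scalemxAl !scalerA mulfV ?mulVf // !scale1r.
by rewrite mulmxN mulNmx !mulmx1 tr_rJcplx mulmxN rJcplx_sqr opprK.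
Qed.

(* [rJblockG t - rJblockG t^-1] is [(t - t^-1) *: rJblockS], here with t = 2. *)
Lemma rJblockS_span :
  rJblockS = (2%:R / 3%:R) *: (rJblockG 2%:R - rJblockG 2%:R^-1).
Proof.
rewrite /rJblockG opp_block_mx add_block_mx scale_block_mx !(oppr0, addr0, scaler0).
rewrite /rJblockS -!scalerBl !scalerA invrK tr_rJcplx.
have -> : 2%:R / 3%:R * (2%:R - 2%:R^-1) = 1 :> R by field.
have -> : 2%:R / 3%:R * (2%:R^-1 - 2%:R) = -1 :> R by field.
by rewrite scale1r scaleN1r.
Qed.

End RealJordanBlock.

Section BlockDiagonalBasis.
Variables (R : comUnitRingType) (p : nat) (d : 'I_p -> nat) (n : nat).
Variables (T : 'M[R]_(\sum_i d i, n)) (Ti : 'M[R]_(n, \sum_i d i)).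
Hypotheses (TTi : T *m Ti = 1%:M) (TiT : Ti *m T = 1%:M).
Implicit Types F G : forall i, 'M[R]_(d i).

(* The rows of [T] form a basis; maps act on row vectors on the right, so an
   endomorphism and a bilinear form with block diagonal matrix [\mxdiag F] in
   that basis have the following matrices in the standard basis. *)
Definition blockdiag_endo F : 'M[R]_n := Ti *m \mxdiag_i F i *m T.
Definition blockdiag_form F : 'M[R]_n := Ti *m \mxdiag_i F i *m Ti^T.

Lemma eq_blockdiag_endo F G : (forall i, F i = G i) ->
  blockdiag_endo F = blockdiag_endo G.
Proof. by move=> FG; rewrite /blockdiag_endo (eq_mxdiag FG). Qed.

Lemma eq_blockdiag_form F G : (forall i, F i = G i) ->
  blockdiag_form F = blockdiag_form G.
Proof. by move=> FG; rewrite /blockdiag_form (eq_mxdiag FG). Qed.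

Lemma blockdiag_endoM F G :
  blockdiag_endo F *m blockdiag_endo G = blockdiag_endo (fun i => F i *m G i).
Proof.
rewrite /blockdiag_endo -!mulmxA (mulmxA T) TTi mul1mx.
by rewrite (mulmxA (\mxdiag_i F i)) mul_mxdiag.
Qed.

Lemma blockdiag_endoD F G :
  blockdiag_endo (fun i => F i + G i) = blockdiag_endo F + blockdiag_endo G.
Proof. by rewrite /blockdiag_endo mxdiagD mulmxDr mulmxDl. Qed.

Lemma blockdiag_endoN F : blockdiag_endo (fun i => - F i) = - blockdiag_endo F.
Proof. by rewrite /blockdiag_endo mxdiagN mulmxN mulNmx. Qed.

Lemma blockdiag_endoB F G :
  blockdiag_endo (fun i => F i - G i) = blockdiag_endo F - blockdiag_endo G.
Proof. by rewrite blockdiag_endoD blockdiag_endoN. Qed.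

Lemma blockdiag_endo0 : blockdiag_endo (fun i => 0) = 0.
Proof. by rewrite /blockdiag_endo mxdiag0 mulmx0 mul0mx. Qed.

Lemma blockdiag_endoZ c F :
  blockdiag_endo (fun i => c *: F i) = c *: blockdiag_endo F.
Proof.
rewrite /blockdiag_endo scalemxAl scalemxAr -mul_scalar_mx -mxdiagZ mul_mxdiag.
by congr (_ *m _ *m _); apply: eq_mxdiag => i; rewrite mul_scalar_mx.
Qed.

Lemma blockdiag_endo_scalar c : blockdiag_endo (fun i => c%:M) = c%:M.
Proof. by rewrite /blockdiag_endo mxdiagZ mul_mx_scalar -scalemxAl TiT scalemx1. Qed.

Lemma blockdiag_endoX F e :
  blockdiag_endo F ^+ e = blockdiag_endo (fun i => F i ^+ e).
Proof.
elim: e => [|e IHe].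
  rewrite expr0 -[1](blockdiag_endo_scalar 1).
  by congr (_ *m _ *m _); apply: eq_mxdiag => i; rewrite expr0.
rewrite exprS -mulmxE IHe blockdiag_endoM.
by congr (_ *m _ *m _); apply: eq_mxdiag => i; rewrite mulmxE -exprS.
Qed.

Lemma blockdiag_endo_congr G F :
  blockdiag_endo G *m blockdiag_form F *m (blockdiag_endo G)^T =
  blockdiag_form (fun i => G i *m F i *m (G i)^T).
Proof.
have TitTt : Ti^T *m T^T = 1%:M by rewrite -trmx_mul TTi trmx1.
rewrite /blockdiag_endo /blockdiag_form !trmx_mul tr_mxdiag.
rewrite -!mulmxA (mulmxA T) TTi mul1mx (mulmxA Ti^T) TitTt mul1mx.
rewrite (mulmxA (\mxdiag_i F i)) mul_mxdiag (mulmxA (\mxdiag_i G i)) mul_mxdiag.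
by under eq_mxdiag do rewrite mulmxA.
Qed.

Lemma blockdiag_form_mulV F G G' : (forall i, G i *m G' i = 1%:M) ->
  blockdiag_form F *m invmx (blockdiag_form G) = blockdiag_endo (fun i => F i *m G' i).
Proof.
move=> GG'; have TitTt : Ti^T *m T^T = 1%:M by rewrite -trmx_mul TTi trmx1.
have DG : \mxdiag_i G i *m \mxdiag_i G' i = 1%:M.
  by rewrite mul_mxdiag; under eq_mxdiag do rewrite GG'; rewrite mxdiagZ.
have GV : blockdiag_form G *m (T^T *m \mxdiag_i G' i *m T) = 1%:M.
  by rewrite !mulmxA -(mulmxA _ Ti^T) TitTt mulmx1 -(mulmxA Ti) DG mulmx1 TiT.
have [uG _] := mulmx1_unit GV.
have -> : invmx (blockdiag_form G) = T^T *m \mxdiag_i G' i *m T.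
  by rewrite -[LHS]mulmx1 -GV mulKmx.
rewrite /blockdiag_form /blockdiag_endo -!mulmxA (mulmxA Ti^T) TitTt mul1mx.
by rewrite (mulmxA (\mxdiag_i F i)) mul_mxdiag.
Qed.
End BlockDiagonalBasis.

Section RealJordanBasis.
Variables (R : rcfType) (a b : R) (p : nat) (k : 'I_p -> nat) (n : nat).
Variables (T : 'M[R]_(\sum_i ((k i).*2 + (k i).*2), n))
  (Ti : 'M[R]_(n, \sum_i ((k i).*2 + (k i).*2))).
Hypotheses (TTi : T *m Ti = 1%:M) (TiT : Ti *m T = 1%:M).
Local Notation A := (blockdiag_form Ti (fun i => rJblockA a b (k i))).
Local Notation B := (blockdiag_form Ti (fun i => rJblockB R (k i))).
Local Notation S := (blockdiag_endo T Ti (fun i => rJblockS R (k i))).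
Local Notation N := (blockdiag_endo T Ti (fun i => rJblockN (k i) b)).
Local Notation G t := (blockdiag_endo T Ti (fun i => rJblockG (k i) t)).

Lemma rJbasis_PopE : b != 0 -> b^-1 *: (Pop A B - a%:M) = S + N.
Proof.
move=> b0; have BV i : rJblockB R (k i) *m - rJblockB R (k i) = 1%:M.
  by rewrite mulmxN rJblockB_sqr opprK.
rewrite /Pop (blockdiag_form_mulV TTi TiT _ BV) -(blockdiag_endo_scalar TiT a).
rewrite -blockdiag_endoB -blockdiag_endoZ -blockdiag_endoD.
by apply: eq_blockdiag_endo => i; apply: rJblockA_mulNB.
Qed.

Lemma rJbasisS_sqr : S * S = -1.
Proof.
rewrite -mulmxE (blockdiag_endoM TTi).
rewrite (eq_blockdiag_endo T Ti (fun i => rJblockS_sqr R (k i))).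
by rewrite blockdiag_endoN (blockdiag_endo_scalar TiT).
Qed.

Lemma rJbasisSN : GRing.comm S N.
Proof.
rewrite /GRing.comm -!mulmxE !(blockdiag_endoM TTi).
by apply: eq_blockdiag_endo => i; apply: rJblockSN.
Qed.

Lemma rJbasisN_nilpotent : N ^+ (\max_i k i) = 0.
Proof.
rewrite (blockdiag_endoX TTi TiT) -[RHS](blockdiag_endo0 T Ti).
apply: eq_blockdiag_endo => i.
by rewrite -(subnKC (leq_bigmax i)) exprD rJblockN_nilpotent mul0r.
Qed.

Lemma rJbasisG_aut t : t != 0 -> autAB A B (G t).
Proof.
move=> t0; apply/autABP; split.
- have GV : G t *m blockdiag_endo T Ti (fun i => - rJblockG (k i) t^-1) = 1%:M.
    rewrite (blockdiag_endoM TTi) -(blockdiag_endo_scalar TiT 1).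
    by apply: eq_blockdiag_endo => i; apply: rJblockG_inv.
  exact: (mulmx1_unit GV).1.
- rewrite (blockdiag_endo_congr TTi).
  by apply: eq_blockdiag_form => i; apply: rJblockG_A.
- rewrite (blockdiag_endo_congr TTi).
  by apply: eq_blockdiag_form => i; apply: rJblockG_B.
Qed.

Lemma rJbasisS_span : S = (2%:R / 3%:R) *: (G 2%:R - G 2%:R^-1).
Proof.
rewrite -blockdiag_endoB -blockdiag_endoZ.
by apply: eq_blockdiag_endo => i; apply: rJblockS_span.
Qed.
End RealJordanBasis.

Lemma real_jordan_complex_structure (R : rcfType) n (A B : 'M[R]_n) a b :
  b != 0 -> JK_only_real_jordan a b A B ->
  exists S N : 'M[R]_n,
    [/\ b^-1 *: (Pop A B - a%:M) = S + N, S * S = -1, GRing.comm S N,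
        exists e, N ^+ e = 0 &
        exists Q1 Q2, [/\ autAB A B Q1, autAB A B Q2 &
                          S = (2%:R / 3%:R) *: (Q1 - Q2)]].
Proof.
move=> b0 [p [k [T [/row_freeP[Ti TTi] /row_fullP[Tl TlT] TA TB]]]].
have TiT : Ti *m T = 1%:M.
  by rewrite -[Ti *m T]mul1mx -TlT !mulmxA -(mulmxA _ T Ti) TTi mulmx1 TlT.
have formE M : M = Ti *m (T *m M *m T^T) *m Ti^T.
  by rewrite !mulmxA TiT mul1mx -mulmxA -trmx_mul TiT trmx1 mulmx1.
have -> : A = blockdiag_form Ti (fun i => rJblockA a b (k i)).
  by rewrite /blockdiag_form -TA -formE.
have -> : B = blockdiag_form Ti (fun i => rJblockB R (k i)).
  by rewrite /blockdiag_form -TB -formE.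
exists (blockdiag_endo T Ti (fun i => rJblockS R (k i))).
exists (blockdiag_endo T Ti (fun i => rJblockN (k i) b)).
split; [exact: rJbasis_PopE | exact: rJbasisS_sqr | exact: rJbasisSN | |].
  by exists (\max_i k i); apply: rJbasisN_nilpotent.
exists (blockdiag_endo T Ti (fun i => rJblockG (k i) 2%:R)).
exists (blockdiag_endo T Ti (fun i => rJblockG (k i) 2%:R^-1)).
split; last exact: rJbasisS_span.
- by apply: rJbasisG_aut; rewrite ?pnatr_eq0.
- by apply: rJbasisG_aut; rewrite ?invr_eq0 ?pnatr_eq0.
Qed.

Unset Implicit Arguments.

Theorem theorem9 (R : rcfType) (n : nat) (A B : 'M[R]_n) (a b : R)
    (J : 'M[R]_n) :
  A^T = - A -> B^T = - B -> B \in unitmx -> b != 0 ->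
  JK_only_real_jordan a b A B ->
  semisimple_part (b^-1 *: (Pop A B - a%:M)) J ->
  [/\ (forall Q, autAB A B Q -> Q *m J = J *m Q),
      (forall Q, autAB A B Q <-> autABC J A B Q)
    & (forall U : 'M[R]_n,
         invariant_sub A B U <-> ((U *m J <= U)%MS /\ invariant_subC J A B U))].
Proof.
move=> _ _ uB b0 /(real_jordan_complex_structure b0).
case=> S [N [XE SS cSN [e Ne] [Q1 [Q2 [aQ1 aQ2 SE]]]]].
rewrite XE => /(semisimple_part_complexE SS cSN Ne) JS.
have autJ Q : autAB A B Q -> Q *m J = J *m Q.
  move=> aQ; rewrite JS; apply: (comm_complex_part_mx SS cSN Ne); rewrite -XE.
  rewrite /GRing.comm -!mulmxE -scalemxAl -scalemxAr mulmxBl mulmxBr.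
  by rewrite (autAB_comm_Pop uB aQ) scalar_mxC.
split=> [//|Q|U].
  by split=> [aQ|/autABC_autAB//]; apply: autAB_autABC (autJ Q aQ) aQ.
split=> [iU|[_ iU] Q aQ].
  split; first by rewrite JS SE; apply: invariant_sub_autZB aQ1 aQ2 iU.
  by move=> Q /autABC_autAB /iU.
exact: iU (autAB_autABC (autJ Q aQ) aQ).
Qed.
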